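(* Let $L$ be the unnormalized Laplacian of a simple undirected network with $M$ edges, with simple eigenvalues $\lambda_1,\dots,\lambda_N$ and orthonormal eigenvectors $\bm v^{(1)},\dots,\bm v^{(N)}$. Suppose the network is modified by adding a set of edges $\mathcal{E}^+$ and removing a set of edges $\mathcal{E}^-$, encoded by $\Delta L=\sum_{(p,q)\in\mathcal{E}^+}\Delta L^{(pq)}-\sum_{(p,q)\in\mathcal{E}^-}\Delta L^{(pq)}$, where $\Delta L^{(pq)}$ has entries $\Delta L^{(pq)}_{pp}=\Delta L^{(pq)}_{qq}=1$, $\Delta L^{(pq)}_{pq}=\Delta L^{(pq)}_{qp}=-1$, and $0$ elsewhere. Let $L(\epsilon)=L+\epsilon\,\Delta L$, assume its eigenvalues $\lambda_i(\epsilon)$ are simple, and let $h(\epsilon)=-\sum_i\frac{\lambda_i(\epsilon)}{2M}\log_2\frac{\lambda_i(\epsilon)}{2M}$. Then $h(\epsilon)=h(0)+\epsilon h'(0)+\mathcal{O}(\epsilon^2)$ with $$h'(0)=-\frac{1}{2M}\sum_{i=1}^N\left(\sum_{(p,q)\in\mathcal{E}^+}(\bm v^{(i)}_p-\bm v^{(i)}_q)^2-\sum_{(p,q)\in\mathcal{E}^-}(\bm v^{(i)}_p-\bm v^{(i)}_q)^2\right)\left(\log_2\frac{\lambda_i}{2M}+\frac{1}{\ln 2}\right).$$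
   Context: For a simple undirected unweighted network with adjacency matrix $A$ and degree matrix $D$, the unnormalized Laplacian is $L=D-A$. The von Neumann entropy of a network with $M$ edges and Laplacian eigenvalues $\lambda_i$ is $-\sum_i\frac{\lambda_i}{2M}\log_2\frac{\lambda_i}{2M}$ with $0\log_2 0=0$. *)

From mathcomp Require Import all_boot all_order all_algebra.
From mathcomp Require Import all_classical all_reals all_analysis.
Set Implicit Arguments. Unset Strict Implicit. Unset Printing Implicit Defensive.
Import Order.TTheory GRing.Theory Num.Theory.
Local Open Scope ring_scope.

Definition log2 (R : realType) (x : R) : R := ln x / ln 2.

Definition xlog2 (R : realType) (x : R) : R := if x == 0 then 0 else x * log2 x.

Definition simple_graph n (adj : rel 'I_n) : Prop := irreflexive adj /\ symmetric adj.

Definition num_edges n (adj : rel 'I_n) : nat :=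
  #|[set pq : 'I_n * 'I_n | (pq.1 < pq.2)%N && adj pq.1 pq.2]|.

Definition degree n (adj : rel 'I_n) (i : 'I_n) : nat := #|[set j | adj i j]|.

Definition adjacency_mx (R : realType) n (adj : rel 'I_n) : 'M[R]_n :=
  \matrix_(i, j) (adj i j)%:R.

Definition degree_mx (R : realType) n (adj : rel 'I_n) : 'M[R]_n :=
  \matrix_(i, j) (if i == j then (degree adj i)%:R else 0).

Definition laplacian (R : realType) n (adj : rel 'I_n) : 'M[R]_n :=
  degree_mx R adj - adjacency_mx R adj.

Definition dL (R : realType) n (p q : 'I_n) : 'M[R]_n :=
  \matrix_(i, j)
    (if ((i == p) && (j == p)) || ((i == q) && (j == q)) then 1
     else if ((i == p) && (j == q)) || ((i == q) && (j == p)) then -1 else 0).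

Definition DeltaL (R : realType) n (Eplus Eminus : {set 'I_n * 'I_n}) : 'M[R]_n :=
  \sum_(pq in Eplus) dL R pq.1 pq.2 - \sum_(pq in Eminus) dL R pq.1 pq.2.

From mathcomp Require Import all_boot all_order all_algebra.
From mathcomp Require Import all_classical all_reals all_analysis.
From mathcomp Require Import ring lra.
Import Order.TTheory GRing.Theory Num.Theory.
Local Open Scope ring_scope.

Set Implicit Arguments. Unset Strict Implicit. Unset Printing Implicit Defensive.

(* In the orthonormal eigenbasis V of L, the matrix L(e) = L + e ΔL becomes
   S(e) = diag λ + e B with B = Vᵀ ΔL V symmetric, and B_ii = v^(i)ᵀ ΔL v^(i)
   is the edge sum appearing in h'(0).  For a symmetric matrix, a vector x with
   |x S - t x| <= ρ |x| forces an eigenvalue within ρ of t; the trial vector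
   e_i + e w, with w the first-order correction of the i-th eigenvector, has
   residual O(e²), so λ_i + e B_ii is within O(e²) of an eigenvalue of L(e), and
   the spectral gap of the simple λ's makes this matching a bijection for small e.
   The all-ones vector is in the kernel of both L and ΔL, so the zero eigenvalue
   is matched exactly and has B_ii = 0; every other λ_i is positive, where
   x log₂ x has a second-order Taylor bound, and summing these bounds gives
   h(e) = h(0) + e h'(0) + O(e²). *)

(** * Second-order bounds for the entropy terms *)

Lemma first_order_comp (R : realFieldType) (f : R -> R) (x0 f1 A r mu K : R) :
  0 <= A -> 0 < r -> 0 <= K ->
  (forall x, `|x - x0| < r -> `|f x - f x0 - f1 * (x - x0)| <= A * (x - x0) ^+ 2) ->
  exists2 d, 0 < d & forall e x, `|e| < d -> `|x - x0 - e * mu| <= K * e ^+ 2 ->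
    `|f x - f x0 - e * (f1 * mu)| <= (A * (`|mu| + K) ^+ 2 + `|f1| * K) * e ^+ 2.
Proof.
move=> A_ge0 r_gt0 K_ge0 f_taylor.
have muK_gt0 : 0 < `|mu| + K + 1 by rewrite ltr_wpDl // addr_ge0.
exists (Num.min 1 (r / (`|mu| + K + 1))) => [|e x].
  by rewrite lt_min ltr01 divr_gt0.
rewrite lt_min ltr_pdivlMr // => /andP[e_lt1 e_small] x_near.
have e2_le : e ^+ 2 <= `|e| by rewrite -real_normK ?num_real // expr2 ler_piMr // ltW.
have dx_le : `|x - x0| <= `|e| * (`|mu| + K).
  have := ler_normD (x - x0 - e * mu) (e * mu); rewrite subrK normrM.
  have := ler_wpM2l K_ge0 e2_le; lra.
have dx_lt : `|x - x0| < r.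
  by apply: le_lt_trans dx_le _; apply: le_lt_trans e_small; rewrite ler_wpM2l // lerDl.
have dx2_le : (x - x0) ^+ 2 <= (`|mu| + K) ^+ 2 * e ^+ 2.
  rewrite -real_normK ?num_real // -[(x - x0) ^+ 2]real_normK ?num_real // mulrC -exprMn.
  by rewrite ler_sqr ?nnegrE ?mulr_ge0 ?addr_ge0.
have -> : f x - f x0 - e * (f1 * mu) =
    (f x - f x0 - f1 * (x - x0)) + f1 * (x - x0 - e * mu) by ring.
apply: le_trans (ler_normD _ _) _; rewrite mulrDl normrM -mulrA.
apply: lerD; first exact: le_trans (f_taylor _ dx_lt) (ler_wpM2l A_ge0 dx2_le).
by rewrite -mulrA ler_wpM2l.
Qed.

Section EntropyTerm.
Variable R : realType.

Lemma ln_le_subr1 (x : R) : 0 < x -> ln x <= x - 1.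
Proof. by move=> x_gt0; have := expR_ge1Dx (ln x); rewrite lnK ?posrE //; lra. Qed.

Lemma xlnx_taylor (y y0 : R) : 0 < y -> 0 < y0 ->
  0 <= y * ln y - y0 * ln y0 - (ln y0 + 1) * (y - y0) <= (y - y0) ^+ 2 / y0.
Proof.
move=> y_gt0 y0_gt0; have r_gt0 : 0 < y / y0 by rewrite divr_gt0.
have -> : y * ln y - y0 * ln y0 - (ln y0 + 1) * (y - y0) = y * ln (y / y0) - (y - y0).
  by rewrite ln_div ?posrE //; ring.
have ln_ge : y - y0 <= y * ln (y / y0).
  have := @ln_le_subr1 (y / y0)^-1; rewrite invr_gt0 => /(_ r_gt0).
  rewrite lnV ?posrE // invf_div => ln_le.
  have -> : y - y0 = y * (1 - y0 / y) by field; rewrite gt_eqF.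
  by apply: ler_wpM2l; [exact: ltW | lra].
have ln_le : y * ln (y / y0) <= y - y0 + (y - y0) ^+ 2 / y0.
  have -> : y - y0 + (y - y0) ^+ 2 / y0 = y * (y / y0 - 1) by field; rewrite gt_eqF.
  by apply: ler_wpM2l; [exact: ltW | exact: ln_le_subr1].
by apply/andP; split; lra.
Qed.

Lemma xlog2_taylor (y y0 : R) : 0 < y -> 0 < y0 ->
  `|xlog2 y - xlog2 y0 - (log2 y0 + (ln 2)^-1) * (y - y0)| <= (y - y0) ^+ 2 / (y0 * ln 2).
Proof.
move=> y_gt0 y0_gt0; have ln2_gt0 : 0 < ln (2 : R) by rewrite ln_gt0 ?ltr1n.
have /andP[T_ge0 T_le] := xlnx_taylor y_gt0 y0_gt0.
have -> : xlog2 y - xlog2 y0 - (log2 y0 + (ln 2)^-1) * (y - y0) =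
    (y * ln y - y0 * ln y0 - (ln y0 + 1) * (y - y0)) / ln 2.
  by rewrite /xlog2 /log2 !gt_eqF //; field; rewrite gt_eqF.
rewrite ger0_norm; last by rewrite divr_ge0 // ltW.
by rewrite invfM mulrA; apply: ler_wpM2r => //; rewrite invr_ge0 ltW.
Qed.

(* x log x has no first-order expansion at 0, hence the exactness hypothesis
   when [lam = 0]. *)
Lemma xlog2_div_first_order (c lam mu K : R) :
  0 < c -> 0 <= lam -> 0 <= K -> (lam = 0 -> mu = 0) ->
  exists C, exists2 d, 0 < d & forall e x, `|e| < d ->
    `|x - lam - e * mu| <= K * e ^+ 2 -> (lam = 0 -> x = 0) ->
    `|xlog2 (x / c) - xlog2 (lam / c) - e * (c^-1 * (log2 (lam / c) + (ln 2)^-1) * mu)|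
      <= C * e ^+ 2.
Proof.
move=> c_gt0 lam_ge0 K_ge0 mu0; have [lam0|lam_neq0] := eqVneq lam 0.
  exists 0, 1 => // e x _ _ /(_ lam0) ->; rewrite lam0 mu0 //.
  by rewrite /xlog2 !(mul0r, eqxx, mulr0, subr0, normr0).
have lam_gt0 : 0 < lam by rewrite lt_def lam_neq0.
have ln2_gt0 : 0 < ln (2 : R) by rewrite ln_gt0 ?ltr1n.
pose A := (c * lam * ln 2)^-1.
have A_ge0 : 0 <= A by rewrite invr_ge0 !mulr_ge0 ?ltW.
pose f1 := c^-1 * (log2 (lam / c) + (ln 2)^-1).
have taylor x : `|x - lam| < lam ->
    `|xlog2 (x / c) - xlog2 (lam / c) - f1 * (x - lam)| <= A * (x - lam) ^+ 2.
  rewrite ltr_distlC ltrDr => /andP[_ x_gt0].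
  have := xlog2_taylor (divr_gt0 x_gt0 c_gt0) (divr_gt0 lam_gt0 c_gt0).
  have -> : (x / c - lam / c) ^+ 2 / (lam / c * ln 2) = A * (x - lam) ^+ 2.
    by rewrite /A; field; rewrite !gt_eqF.
  suff -> : f1 * (x - lam) = (log2 (lam / c) + (ln 2)^-1) * (x / c - lam / c) by [].
  by rewrite /f1; field; rewrite !gt_eqF.
have [d d_gt0 expand] := first_order_comp mu A_ge0 lam_gt0 K_ge0 taylor.
by exists (A * (`|mu| + K) ^+ 2 + `|f1| * K), d => // e x e_small x_near _; apply: expand.
Qed.

Lemma xlog2_sum_first_order n (c K : R) (lam mu : 'I_n -> R) :
  0 < c -> 0 <= K -> (forall i, 0 <= lam i) -> (forall i, lam i = 0 -> mu i = 0) ->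
  exists C, exists2 d, 0 < d & forall e (nu : 'I_n -> R), `|e| < d ->
    (forall i, `|nu i - lam i - e * mu i| <= K * e ^+ 2) -> (forall i, lam i = 0 -> nu i = 0) ->
    `|\sum_i xlog2 (nu i / c) - \sum_i xlog2 (lam i / c)
      - e * (c^-1 * \sum_i mu i * (log2 (lam i / c) + (ln 2)^-1))| <= C * e ^+ 2.
Proof.
move=> c_gt0 K_ge0 lam_ge0 mu0.
have /fin_all_exists[Cd term_bound] : forall i, exists Cd : R * R, 0 < Cd.2 /\
    forall e x, `|e| < Cd.2 -> `|x - lam i - e * mu i| <= K * e ^+ 2 -> (lam i = 0 -> x = 0) ->
    `|xlog2 (x / c) - xlog2 (lam i / c)
      - e * (c^-1 * (log2 (lam i / c) + (ln 2)^-1) * mu i)| <= Cd.1 * e ^+ 2.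
  move=> i; have [C [d d_gt0 bound]] := xlog2_div_first_order c_gt0 (lam_ge0 i) K_ge0 (@mu0 i).
  by exists (C, d).
exists (\sum_i (Cd i).1), (\big[Num.min/1]_i (Cd i).2).
  by apply: lt_bigmin => // i _; case: (term_bound i).
move=> e nu e_small nu_near nu0.
rewrite mulr_suml mulr_sumr mulr_sumr -!sumrB; apply: le_trans (ler_norm_sum _ _ _) _.
apply: ler_sum => i _; have [_ bound] := term_bound i.
have := bound e (nu i) (lt_le_trans e_small (bigmin_le _ _ _)) (nu_near i) (@nu0 i).
by rewrite [mu i * _]mulrC [c^-1 * (_ * mu i)]mulrA.
Qed.

Lemma entropy_first_order n (c : R) (lam mu : 'I_n -> R) (nut : R -> 'I_n -> R) :
  0 < c -> (forall i, 0 <= lam i) -> (forall i, lam i = 0 -> mu i = 0) ->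
  (exists2 K, 0 <= K & exists2 d, 0 < d & forall e, `|e| < d ->
    exists2 sgm : 'I_n -> 'I_n, injective sgm & forall i,
      `|nut e (sgm i) - lam i - e * mu i| <= K * e ^+ 2 /\
      (lam i = 0 -> nut e (sgm i) = 0)) ->
  exists C, exists2 d, 0 < d & forall e, `|e| < d ->
    `|\sum_i xlog2 (nut e i / c) - \sum_i xlog2 (nut 0 i / c)
      - e * (c^-1 * \sum_i mu i * (log2 (lam i / c) + (ln 2)^-1))| <= C * e ^+ 2.
Proof.
move=> c_gt0 lam_ge0 mu0 [K K_ge0 [d1 d1_gt0 matching]].
have [C [d2 d2_gt0 expand]] := xlog2_sum_first_order c_gt0 K_ge0 lam_ge0 mu0.
exists C, (Num.min d1 d2) => [|e]; first by rewrite lt_min d1_gt0.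
rewrite lt_min => /andP[e_d1 e_d2].
have [sgm sgm_inj sgm_e] := matching e e_d1.
have [sgm0 sgm0_inj sgm0_e] := matching 0 ltac:(by rewrite normr0).
have sum0 : \sum_i xlog2 (nut 0 i / c) = \sum_i xlog2 (lam i / c).
  rewrite (reindex_inj sgm0_inj); apply: eq_bigr => i _; have [+ _] := sgm0_e i.
  by rewrite mul0r subr0 expr0n mulr0 normr_le0 subr_eq0 => /eqP ->.
rewrite sum0 (reindex_inj sgm_inj).
exact: expand e (nut e \o sgm) e_d2 (fun i => (sgm_e i).1) (fun i => (sgm_e i).2).
Qed.

End EntropyTerm.

(** * Symmetric matrices and their spectra *)

Section RowVectors.
Variables (R : realFieldType) (n : nat).
Implicit Types (u v x : 'rV[R]_n).

Definition vdot u v : R := (u *m v^T) 0 0.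
Definition vnorm2 u : R := vdot u u.

Lemma vdotC u v : vdot u v = vdot v u.
Proof. by rewrite /vdot !mxE; apply: eq_bigr => j _; rewrite !mxE mulrC. Qed.

Lemma vdotZl a u v : vdot (a *: u) v = a * vdot u v.
Proof. by rewrite /vdot -scalemxAl mxE. Qed.

Lemma vdotBr u v x : vdot u (v - x) = vdot u v - vdot u x.
Proof. by rewrite /vdot linearB /= mulmxBr !mxE. Qed.

Lemma vdot_delta u j : vdot u (delta_mx 0 j) = u 0 j.
Proof. by rewrite /vdot trmx_delta -colE mxE. Qed.

Lemma vdot_mul_sym (S : 'M[R]_n) u v : S^T = S -> vdot (u *m S) v = vdot u (v *m S).
Proof. by move=> S_sym; rewrite /vdot trmx_mul S_sym mulmxA. Qed.

Lemma vnorm2E u : vnorm2 u = \sum_j u 0 j ^+ 2.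
Proof. by rewrite /vnorm2 /vdot mxE; apply: eq_bigr => j _; rewrite !mxE expr2. Qed.

Lemma vnorm2_ge0 u : 0 <= vnorm2 u.
Proof. by rewrite vnorm2E sumr_ge0 // => j _; rewrite sqr_ge0. Qed.

Lemma vnorm2_ge_coord u j : u 0 j ^+ 2 <= vnorm2 u.
Proof.
by rewrite vnorm2E (bigD1 j) //= lerDl sumr_ge0 // => k _; rewrite sqr_ge0.
Qed.

Lemma rV_neq0_coord u : u != 0 -> exists j, u 0 j != 0.
Proof.
move=> u_neq0; apply/existsP; apply: contraNT u_neq0 => /existsPn u0.
by apply/eqP/rowP => j; rewrite mxE; apply/eqP/negPn/u0.
Qed.

Lemma vnorm2_gt0 u : u != 0 -> 0 < vnorm2 u.
Proof.
move=> /rV_neq0_coord[j uj_neq0]; apply: lt_le_trans (vnorm2_ge_coord u j).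
by rewrite exprn_even_gt0.
Qed.

Lemma vnorm2Z a u : vnorm2 (a *: u) = a ^+ 2 * vnorm2 u.
Proof. by rewrite /vnorm2 vdotZl vdotC vdotZl mulrA expr2. Qed.

Lemma eigenvectors_orthogonal (S : 'M[R]_n) u v a b : S^T = S ->
  u *m S = a *: u -> v *m S = b *: v -> a != b -> vdot u v = 0.
Proof.
move=> S_sym uS vS a_neq_b.
have : a * vdot u v = b * vdot u v.
  by rewrite -vdotZl -uS vdot_mul_sym // vS vdotC vdotZl vdotC.
by move/eqP; rewrite -subr_eq0 -mulrBl mulf_eq0 subr_eq0 (negbTE a_neq_b) => /eqP.
Qed.

Lemma mulmx_tr_orthogonal_rows m (U : 'M[R]_(m, n)) :
  (forall k l, k != l -> vdot (row k U) (row l U) = 0) ->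
  U *m U^T = diag_mx (\row_k vnorm2 (row k U)).
Proof.
move=> U_orth; apply/matrixP => k l; rewrite !mxE.
have [<-|kl] := eqVneq k l; rewrite /= ?mulr1n ?mulr0n.
  by rewrite /vnorm2 /vdot mxE; apply: eq_bigr => j _; rewrite !mxE.
rewrite -[RHS](U_orth k l kl) /vdot mxE.
by apply: eq_bigr => j _; rewrite !mxE.
Qed.

Lemma vnorm2_mul_orthogonal_rows m (U : 'M[R]_(m, n)) (c : 'rV[R]_m) :
  (forall k l, k != l -> vdot (row k U) (row l U) = 0) ->
  vnorm2 (c *m U) = \sum_k c 0 k ^+ 2 * vnorm2 (row k U).
Proof.
move=> /mulmx_tr_orthogonal_rows UUt.
rewrite {1}/vnorm2 /vdot trmx_mul mulmxA -(mulmxA c) UUt mul_mx_diag mxE.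
by apply: eq_bigr => k _; rewrite !mxE; ring.
Qed.

End RowVectors.

Section SymmetricSpectrum.
Variables (R : realFieldType) (n : nat) (S : 'M[R]_n) (nu : 'I_n -> R).
Hypotheses (S_sym : S^T = S) (nu_inj : injective nu)
  (nu_eig : forall k, eigenvalue S (nu k)).

Lemma eigen_residual x t : x != 0 ->
  exists k, (nu k - t) ^+ 2 * vnorm2 x <= vnorm2 (x *m S - t *: x).
Proof.
move=> x_neq0.
have [u u_eig u_neq0] := fin_all_exists2 (fun k => elimT eigenvalueP (nu_eig k)).
pose U := \matrix_k u k.
have U_orth k l : k != l -> vdot (row k U) (row l U) = 0.
  move=> kl; rewrite !rowK; apply: eigenvectors_orthogonal S_sym (u_eig k) (u_eig l) _.
  by apply: contra kl => /eqP/nu_inj ->.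
have rowU_gt0 k : 0 < vnorm2 (row k U) by rewrite rowK vnorm2_gt0.
have U_unit : U \in unitmx.
  have detUUt : \det (U *m U^T) != 0.
    rewrite mulmx_tr_orthogonal_rows // det_diag.
    by apply/prodf_neq0 => k _; rewrite mxE gt_eqF.
  rewrite unitmxE unitfE; apply: contra detUUt => /eqP detU.
  by rewrite det_mulmx detU mul0r.
pose c := x *m invmx U.
have xE : x = c *m U by rewrite mulmxKV.
clearbody c.
have US : U *m S = diag_mx (\row_k nu k) *m U.
  apply/row_matrixP => k; rewrite !row_mul rowK u_eig row_diag_mx -scalemxAl -rowE.
  by rewrite rowK mxE.
have resE : x *m S - t *: x = (c *m diag_mx (\row_k (nu k - t))) *m U.
  rewrite xE -mulmxA US mulmxA scalemxAl -mulmxBl; congr (_ *m U).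
  by rewrite !mul_mx_diag; apply/rowP => k; rewrite !mxE; ring.
have [k0 _] := rV_neq0_coord x_neq0.
case: (@arg_minP _ _ _ k0 xpredT (fun k => (nu k - t) ^+ 2) isT) => k _ k_min.
exists k; rewrite resE {1}xE !vnorm2_mul_orthogonal_rows // mulr_sumr.
apply: ler_sum => l _; rewrite mul_mx_diag !mxE exprMn mulrA.
apply: ler_wpM2r; first exact: ltW.
by rewrite mulrC; apply: ler_wpM2l; [exact: sqr_ge0 | exact: k_min].
Qed.

Lemma eigenvalue_in_spectrum t : eigenvalue S t -> exists k, nu k = t.
Proof.
move=> /eigenvalueP[x xS x_neq0]; have [k] := eigen_residual t x_neq0.
have -> : vnorm2 (x *m S - t *: x) = 0 by rewrite xS subrr /vnorm2 /vdot mul0mx mxE.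
rewrite pmulr_lle0 ?vnorm2_gt0 // => res_le0.
by exists k; apply/eqP; rewrite -subr_eq0 -sqrf_eq0 eq_le sqr_ge0 res_le0.
Qed.

End SymmetricSpectrum.

(** * First-order eigenvalue perturbation *)

Lemma injective_gap (R : realDomainType) (T : finType) (f : T -> R) :
  injective f -> exists2 gap, 0 < gap & forall i j, i != j -> gap <= `|f i - f j|.
Proof.
move=> f_inj; exists (\big[Num.min/1]_(ij : T * T | ij.1 != ij.2) `|f ij.1 - f ij.2|).
  apply: lt_bigmin => // -[i j] /= ij; rewrite normr_gt0 subr_eq0.
  by apply: contra ij => /eqP/f_inj ->.
by move=> i j ij; apply: (@bigmin_le_cond _ _ _ 1 (i, j) (fun ij => ij.1 != ij.2)).
Qed.

Section FirstOrderPerturbation.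
Variables (R : realFieldType) (n : nat) (lam : 'I_n -> R) (B : 'M[R]_n).
Hypotheses (lam_inj : injective lam) (B_sym : B^T = B).

Let S (e : R) := diag_mx (\row_i lam i) + e *: B.

Let S_sym e : (S e)^T = S e.
Proof. by rewrite /S linearD linearZ /= tr_diag_mx B_sym. Qed.

Lemma eigenvalue_first_order i : exists2 K, 0 <= K &
  forall e (nu : 'I_n -> R), injective nu -> (forall k, eigenvalue (S e) (nu k)) ->
  exists k, `|nu k - lam i - e * B i i| <= K * e ^+ 2.
Proof.
(* First-order correction of the i-th eigenvector: it cancels the O(e) part of
   the residual of [x], using the symmetry of [B]. *)
pose w : 'rV_n := \row_j (if j == i then 0 else B j i / (lam i - lam j)).
pose K := vnorm2 (w *m B - B i i *: w).
have K_ge0 : 0 <= K by apply: vnorm2_ge0.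
exists (1 + K) => [|e nu nu_inj nu_eig]; first by rewrite addr_ge0.
pose x := delta_mx 0 i + e *: w.
have x_i : x 0 i = 1 by rewrite !mxE !eqxx /= mulr0 addr0.
have x_norm : 1 <= vnorm2 x by have := vnorm2_ge_coord x i; rewrite x_i expr1n.
have x_neq0 : x != 0 by apply: contra_eq_neq x_i => ->; rewrite mxE eq_sym oner_eq0.
have resE : x *m S e - (lam i + e * B i i) *: x = e ^+ 2 *: (w *m B - B i i *: w).
  rewrite /x /S mulmxDr -scalemxAr mul_mx_diag mulmxDl -scalemxAl -rowE.
  apply/rowP => j; rewrite !mxE.
  have [->|ji] := eqVneq j i; rewrite ?eqxx ?(negbTE ji) /=; first by ring.
  have lam_ij : lam i - lam j != 0 by rewrite subr_eq0 (inj_eq lam_inj) eq_sym.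
  have B_ij : B i j = B j i by rewrite -[in LHS]B_sym mxE.
  by rewrite B_ij; field.
have [k res_k] := eigen_residual (S_sym e) nu_inj nu_eig (lam i + e * B i i) x_neq0.
exists k; rewrite resE vnorm2Z in res_k.
rewrite -ler_sqr ?nnegrE //; last by rewrite mulr_ge0 ?addr_ge0 // sqr_ge0.
rewrite real_normK ?num_real // -addrA -opprD.
apply: (@le_trans _ _ ((nu k - (lam i + e * B i i)) ^+ 2 * vnorm2 x)).
  by rewrite ler_peMr ?sqr_ge0.
apply: le_trans res_k _; rewrite -/K; have := sqr_ge0 e.
by set E := e ^+ 2; nra.
Qed.

Lemma eigenvalue_matching : exists2 K, 0 <= K & exists2 d, 0 < d &
  forall e (nu : 'I_n -> R), `|e| < d ->
  injective nu -> (forall k, eigenvalue (S e) (nu k)) ->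
  exists2 sgm : 'I_n -> 'I_n, injective sgm & forall i,
    `|nu (sgm i) - lam i - e * B i i| <= K * e ^+ 2 /\
    (eigenvalue (S e) (lam i) -> nu (sgm i) = lam i).
Proof.
have [Ki Ki_ge0 approx] := fin_all_exists2 eigenvalue_first_order.
pose K := \big[Num.max/0]_i Ki i.
pose b := \big[Num.max/0]_i `|B i i|.
have b_ge0 : 0 <= b := bigmax_ge_id _ _ _ _.
have K_ge0 : 0 <= K := bigmax_ge_id _ _ _ _.
have [gap gap_gt0 gap_le] := injective_gap lam_inj.
exists K => //; exists (Num.min 1 (gap / (2 * (b + K + 1)))).
  by rewrite lt_min ltr01 divr_gt0 // mulr_gt0 // ltr_wpDl ?addr_ge0.
move=> e nu; rewrite lt_min => /andP[e_lt1 e_small] nu_inj nu_eig.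
have /fin_all_exists[sgm sgm_approx] i :
    exists k, `|nu k - lam i - e * B i i| <= K * e ^+ 2.
  have [k bound] := approx i e nu nu_inj nu_eig; exists k.
  by apply: le_trans bound _; apply: ler_wpM2r; rewrite ?sqr_ge0 ?le_bigmax.
have sgm_near i : `|nu (sgm i) - lam i| < gap / 2.
  rewrite -[nu _ - _](subrK (e * B i i)); apply: le_lt_trans (ler_normD _ _) _.
  rewrite normrM.
  have e2_le : e ^+ 2 <= `|e| by rewrite -real_normK ?num_real // expr2 ler_piMr // ltW.
  have Bii_le : `|B i i| <= b by apply: le_bigmax.
  rewrite ltr_pdivlMr ?mulr_gt0 ?ltr_wpDl ?addr_ge0 // in e_small.
  have := sgm_approx i; have := ler_wpM2l K_ge0 e2_le.
  have := ler_wpM2l (normr_ge0 e) Bii_le; nra.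
have sgm_inj : injective sgm.
  move=> i j sgm_ij; apply/eqP; apply: contraT => ij.
  suff : gap < gap by rewrite ltxx.
  have := ler_distD (nu (sgm i)) (lam i) (lam j); rewrite (distrC (lam i) (nu _)).
  have := gap_le i j ij; have := sgm_near i; have := sgm_near j; rewrite sgm_ij; lra.
exists sgm => // i; split => // /(eigenvalue_in_spectrum (S_sym e) nu_inj nu_eig)[k nu_k].
have [sgm_inv sgm_invK sgmK] := injF_bij sgm_inj.
suff ki : sgm_inv k = i by rewrite -nu_k -ki sgmK.
apply/eqP; apply: contraT => ki; suff : gap < gap by rewrite ltxx.
have := gap_le _ _ ki; have := sgm_near (sgm_inv k).
by rewrite sgmK nu_k distrC; lra.
Qed.

Lemma diag_kernel_zero_row (z : 'rV_n) i : lam i = 0 -> z != 0 ->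
  z *m diag_mx (\row_j lam j) = 0 -> z *m B = 0 -> row i B = 0.
Proof.
move=> lam_i z_neq0 z_diag zB.
have z_supp j : j != i -> z 0 j = 0.
  move=> ji; have /eqP := congr1 (fun v : 'rV_n => v 0 j) z_diag.
  rewrite mul_mx_diag !mxE mulf_eq0 -lam_i (inj_eq lam_inj) (negbTE ji) orbF.
  by move/eqP.
have zE : z = z 0 i *: delta_mx 0 i.
  apply/rowP => j; rewrite !mxE eqxx /=.
  by have [->|ji] := eqVneq j i; rewrite ?mulr1 // z_supp // mulr0.
have zi_neq0 : z 0 i != 0.
  by apply: contra_neq z_neq0 => zi0; rewrite zE zi0 scale0r.
move/eqP: zB; rewrite zE -scalemxAl -rowE scaler_eq0 (negbTE zi_neq0).
by move/eqP.
Qed.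

Lemma zero_row_eigenvalue e i : row i B = 0 -> eigenvalue (S e) (lam i).
Proof.
move=> Bi0; apply/eigenvalueP; exists (delta_mx 0 i).
  by rewrite mulmxDr -scalemxAr -!rowE Bi0 scaler0 addr0 row_diag_mx mxE.
by apply/eqP => /rowP/(_ i); rewrite !mxE !eqxx /=; apply/eqP/oner_neq0.
Qed.

End FirstOrderPerturbation.

(** * Graph Laplacians *)

Section Laplacian.
Variables (R : realType) (n : nat).
Implicit Types (z : 'rV[R]_n) (p q : 'I_n).

Lemma dL_factor p q : p != q ->
  dL R p q = (delta_mx 0 p - delta_mx 0 q : 'rV[R]_n)^T *m (delta_mx 0 p - delta_mx 0 q).
Proof.
move=> pq; have qp : q != p by rewrite eq_sym.
apply/matrixP => i j; rewrite /dL !mxE big_ord1 !mxE /=.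
case: (eqVneq i p) => [->|ip]; case: (eqVneq j p) => [->|jp];
  rewrite ?eqxx ?(negbTE pq) ?(negbTE qp) ?(negbTE ip) ?(negbTE jp) /=;
  by case: (i == q); case: (j == q); rewrite /=; lra.
Qed.

Lemma dL_sym p q : p != q -> (dL R p q)^T = dL R p q.
Proof. by move=> pq; rewrite dL_factor // trmx_mul trmxK. Qed.

Lemma dL_quad z p q : p != q -> vdot (z *m dL R p q) z = (z 0 p - z 0 q) ^+ 2.
Proof.
move=> pq; rewrite dL_factor //; set d := (_ - _ : 'rV_n).
rewrite /vdot !mulmxA -(mulmxA _ d) mxE big_ord1 -/(vdot z d) -/(vdot d z).
by rewrite [vdot d z]vdotC vdotBr !vdot_delta expr2.
Qed.

Lemma ones_dL p q : p != q -> const_mx 1 *m dL R p q = 0 :> 'rV[R]_n.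
Proof.
move=> pq; rewrite dL_factor // mulmxA.
suff -> : (const_mx 1 : 'rV[R]_n) *m (delta_mx 0 p - delta_mx 0 q : 'rV_n)^T = 0.
  by rewrite mul0mx.
by apply/matrixP => i k; rewrite !ord1 [RHS]mxE -/(vdot _ _) vdotBr !vdot_delta !mxE subrr.
Qed.

Section Modification.
Variables Ep Em : {set 'I_n * 'I_n}.
Hypotheses (Ep_loopless : forall pq, pq \in Ep -> pq.1 != pq.2)
  (Em_loopless : forall pq, pq \in Em -> pq.1 != pq.2).

Lemma DeltaL_sym : (DeltaL R Ep Em)^T = DeltaL R Ep Em.
Proof.
rewrite /DeltaL linearB /= !linear_sum /=; congr (_ + _); apply: eq_bigr => pq pq_in.
  by rewrite dL_sym ?Ep_loopless.
by rewrite dL_sym ?Em_loopless.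
Qed.

Lemma ones_DeltaL : const_mx 1 *m DeltaL R Ep Em = 0 :> 'rV[R]_n.
Proof.
rewrite /DeltaL mulmxBr !mulmx_sumr !big1 ?subr0 // => pq pq_in.
  exact: ones_dL (Em_loopless pq_in).
exact: ones_dL (Ep_loopless pq_in).
Qed.

Lemma DeltaL_quad z : vdot (z *m DeltaL R Ep Em) z =
  \sum_(pq in Ep) (z 0 pq.1 - z 0 pq.2) ^+ 2 - \sum_(pq in Em) (z 0 pq.1 - z 0 pq.2) ^+ 2.
Proof.
rewrite /DeltaL /vdot mulmxBr mulmxBl !mulmx_sumr !mulmx_suml !mxE !summxE.
congr (_ - _); apply: eq_bigr => pq pq_in.
  exact: dL_quad (Ep_loopless pq_in).
exact: dL_quad (Em_loopless pq_in).
Qed.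

End Modification.

Section Graph.
Variable adj : rel 'I_n.
Hypothesis adj_sym : symmetric adj.

Let A a b : R := (adj a b)%:R.

Lemma laplacianE a b :
  laplacian R adj a b = (if a == b then \sum_c A a c else 0) - A a b.
Proof.
rewrite !mxE /degree -sum1dep_card natr_sum big_mkcond /=.
by congr ((if _ then _ else _) - _); apply: eq_bigr => c _; rewrite /A; case: adj.
Qed.

Lemma ones_laplacian : const_mx 1 *m laplacian R adj = 0 :> 'rV[R]_n.
Proof.
apply/rowP => b; rewrite !mxE; under eq_bigr => a _ do rewrite mxE mul1r laplacianE.
rewrite sumrB -big_mkcond /= big_pred1_eq; apply/eqP; rewrite subr_eq0; apply/eqP.
by apply: eq_bigr => c _; rewrite /A adj_sym.
Qed.

Lemma laplacian_quad2 z :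
  2 * vdot (z *m laplacian R adj) z = \sum_a \sum_b A a b * (z 0 a - z 0 b) ^+ 2.
Proof.
have quadE : vdot (z *m laplacian R adj) z =
    \sum_a \sum_b A a b * (z 0 a ^+ 2 - z 0 a * z 0 b).
  rewrite /vdot mxE; under eq_bigr => b _ do rewrite !mxE mulr_suml.
  rewrite exchange_big /=; apply: eq_bigr => a _.
  under eq_bigr => b _ do rewrite laplacianE mulrBr mulrBl.
  have diag : \sum_b z 0 a * (if a == b then \sum_c A a c else 0) * z 0 b =
      \sum_b A a b * z 0 a ^+ 2.
    rewrite (bigD1 a) //= eqxx [X in _ + X]big1 => [|b ba]; last first.
      by rewrite eq_sym (negbTE ba) mulr0 mul0r.
    by rewrite addr0 mulr_sumr mulr_suml; apply: eq_bigr => b _; ring.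
  by rewrite sumrB diag -sumrB; apply: eq_bigr => b _; ring.
have quad_swap : vdot (z *m laplacian R adj) z =
    \sum_a \sum_b A a b * (z 0 b ^+ 2 - z 0 a * z 0 b).
  rewrite quadE exchange_big /=; apply: eq_bigr => a _; apply: eq_bigr => b _.
  by rewrite /A adj_sym; ring.
rewrite mulr2n mulrDl mul1r {1}quadE quad_swap -big_split; apply: eq_bigr => a _.
by rewrite -big_split; apply: eq_bigr => b _ /=; ring.
Qed.

Lemma laplacian_psd z : 0 <= vdot (z *m laplacian R adj) z.
Proof.
rewrite -(pmulr_rge0 _ (ltr0n _ 2)) laplacian_quad2.
by do 2!apply: sumr_ge0 => ? _; rewrite mulr_ge0 ?ler0n ?sqr_ge0.
Qed.

End Graph.

End Laplacian.


Section OrthogonalBasis.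
Variables (R : realFieldType) (n : nat) (V : 'M[R]_n).
Hypothesis VtV : V^T *m V = 1%:M.

Lemma trmx_mul_eigenbasis (A : 'M[R]_n) (lam : 'I_n -> R) :
  (forall i, A *m col i V = lam i *: col i V) ->
  V^T *m A *m V = diag_mx (\row_i lam i).
Proof.
move=> AV; rewrite -mulmxA.
suff -> : A *m V = V *m diag_mx (\row_i lam i) by rewrite mulmxA VtV mul1mx.
apply/matrixP => a i; rewrite mul_mx_diag !mxE.
have := congr1 (fun X : 'cV_n => X a 0) (AV i); rewrite !mxE mulrC => <-.
by apply: eq_bigr => b _; rewrite !mxE.
Qed.

Lemma eigenvalue_trmx_conj (A : 'M[R]_n) t :
  eigenvalue A t -> eigenvalue (V^T *m A *m V) t.
Proof.
have VVt : V *m V^T = 1%:M := mulmx1C VtV.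
move=> /eigenvalueP[v vA v_neq0]; apply/eigenvalueP; exists (v *m V).
  by rewrite !mulmxA -(mulmxA v) VVt mulmx1 vA scalemxAl.
by apply: contra_neq v_neq0 => vV0; rewrite -[v]mulmx1 -VVt mulmxA vV0 mul0mx.
Qed.

Lemma trmx_conj_diag_entry (A : 'M[R]_n) i :
  (V^T *m A *m V) i i = vdot ((col i V)^T *m A) (col i V)^T.
Proof.
by rewrite /vdot trmxK tr_col -row_mul !mxE; apply: eq_bigr => j _; rewrite !mxE.
Qed.

End OrthogonalBasis.

(* The paper's λ_i'(0) = v^(i)ᵀ ΔL v^(i), expanded edge by edge. *)
Definition eigenvalue_shift (R : realType) n (V : 'M[R]_n) (Ep Em : {set 'I_n * 'I_n})
    (i : 'I_n) : R :=
  \sum_(pq in Ep) (V pq.1 i - V pq.2 i) ^+ 2 - \sum_(pq in Em) (V pq.1 i - V pq.2 i) ^+ 2.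

Section LaplacianPerturbation.
Variables (R : realType) (n : nat) (adj : rel 'I_n) (Ep Em : {set 'I_n * 'I_n}).
Variables (lam : 'I_n -> R) (V : 'M[R]_n).
Hypotheses (adj_sym : symmetric adj)
  (Ep_loopless : forall pq, pq \in Ep -> pq.1 != pq.2)
  (Em_loopless : forall pq, pq \in Em -> pq.1 != pq.2)
  (VtV : V^T *m V = 1%:M)
  (LV : forall i, laplacian R adj *m col i V = lam i *: col i V)
  (lam_inj : injective lam).

Let B := V^T *m DeltaL R Ep Em *m V.

Let B_sym : B^T = B.
Proof. by rewrite /B !trmx_mul trmxK DeltaL_sym // mulmxA. Qed.

Let eigenvalue_shiftE i : eigenvalue_shift V Ep Em i = B i i.
Proof.
rewrite /B trmx_conj_diag_entry // DeltaL_quad //.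
by congr (_ - _); apply: eq_bigr => pq _; rewrite !mxE.
Qed.

Let zero_row i : lam i = 0 -> row i B = 0.
Proof.
move=> lam_i; pose z := const_mx 1 *m V : 'rV[R]_n.
have zVt : z *m V^T = const_mx 1 by rewrite -mulmxA mulmx1C // mulmx1.
apply: (diag_kernel_zero_row lam_inj (z := z)) => //.
- apply: contra_eq_neq zVt => ->; rewrite mul0mx.
  by apply/eqP => /rowP/(_ i); rewrite !mxE; apply/eqP; rewrite eq_sym oner_eq0.
- by rewrite -(trmx_mul_eigenbasis VtV LV) !mulmxA zVt ones_laplacian // mul0mx.
- by rewrite /B !mulmxA zVt ones_DeltaL // mul0mx.
Qed.

Lemma laplacian_eigenvalue_ge0 i : 0 <= lam i.
Proof.
have := laplacian_psd adj_sym (col i V)^T.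
by rewrite -trmx_conj_diag_entry // (trmx_mul_eigenbasis VtV LV) !mxE eqxx mulr1n.
Qed.

Lemma eigenvalue_shift_eq0 i : lam i = 0 -> eigenvalue_shift V Ep Em i = 0.
Proof. by move/zero_row/rowP/(_ i); rewrite eigenvalue_shiftE !mxE. Qed.

Lemma laplacian_perturbation : exists2 K, 0 <= K & exists2 d, 0 < d &
  forall e (nu : 'I_n -> R), `|e| < d -> injective nu ->
  (forall k, eigenvalue (laplacian R adj + e *: DeltaL R Ep Em) (nu k)) ->
  exists2 sgm : 'I_n -> 'I_n, injective sgm & forall i,
    `|nu (sgm i) - lam i - e * eigenvalue_shift V Ep Em i| <= K * e ^+ 2 /\
    (lam i = 0 -> nu (sgm i) = 0).
Proof.
have [K K_ge0 [d d_gt0 matching]] := eigenvalue_matching lam_inj B_sym.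
exists K => //; exists d => // e nu e_small nu_inj nu_eig.
have S_eq : V^T *m (laplacian R adj + e *: DeltaL R Ep Em) *m V =
    diag_mx (\row_i lam i) + e *: B.
  by rewrite mulmxDr mulmxDl (trmx_mul_eigenbasis VtV LV) -scalemxAr -scalemxAl.
have S_eig k : eigenvalue (diag_mx (\row_i lam i) + e *: B) (nu k).
  by rewrite -S_eq; apply: eigenvalue_trmx_conj.
have [sgm sgm_inj sgm_approx] := matching e nu e_small nu_inj S_eig.
exists sgm => // i; have [approx exact] := sgm_approx i.
rewrite eigenvalue_shiftE; split => // lam0.
by rewrite -lam0 exact // zero_row_eigenvalue // zero_row.
Qed.

End LaplacianPerturbation.

Theorem corollary3p14 (R : realType) (N : nat) (adj : rel 'I_N)
    (Eplus Eminus : {set 'I_N * 'I_N})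
    (lam : 'I_N -> R) (V : 'M[R]_N) (lamt : R -> 'I_N -> R) :
  simple_graph adj ->
  (* E+ : new edges (unordered pairs p<q, not already edges) *)
  (forall pq, pq \in Eplus -> (pq.1 < pq.2)%N && ~~ adj pq.1 pq.2) ->
  (* E- : removed edges (unordered pairs p<q, existing edges) *)
  (forall pq, pq \in Eminus -> (pq.1 < pq.2)%N && adj pq.1 pq.2) ->
  (* columns of V are orthonormal eigenvectors v^(i) of L with eigenvalues lam i *)
  V^T *m V = 1%:M ->
  (forall i, laplacian R adj *m col i V = lam i *: col i V) ->
  (* the eigenvalues of L are simple *)
  injective lam ->
  (* lamt e i : the eigenvalues of L(e) = L + e DeltaL, simple, for e near 0 *)
  (exists2 d : R, 0 < d & forall e : R, `|e| < d ->
      injective (lamt e) /\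
      (forall i, eigenvalue (laplacian R adj + e *: DeltaL R Eplus Eminus) (lamt e i))) ->
  let M : R := (num_edges adj)%:R in
  let h (e : R) : R := - \sum_i xlog2 (lamt e i / (2 * M)) in
  let h'0 : R := - (2 * M)^-1 *
      \sum_i ((\sum_(pq in Eplus) (V pq.1 i - V pq.2 i) ^+ 2
               - \sum_(pq in Eminus) (V pq.1 i - V pq.2 i) ^+ 2)
              * (log2 (lam i / (2 * M)) + (ln (2 : R))^-1)) in
  exists C : R, exists2 d : R, 0 < d & forall e : R, `|e| < d ->
    `|h e - (h 0 + e * h'0)| <= C * e ^+ 2.
Proof.
move=> [_ adj_sym] Ep_ok Em_ok VtV LV lam_inj [d0 d0_gt0 spectrum] M h h'0.
have Ep_loopless pq : pq \in Eplus -> pq.1 != pq.2.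
  by move/Ep_ok/andP => [/ltn_eqF/negbT].
have Em_loopless pq : pq \in Eminus -> pq.1 != pq.2.
  by move/Em_ok/andP => [/ltn_eqF/negbT].
(* Without edges [2 * M = 0], and every term is [xlog2 (x / 0) = xlog2 0 = 0]. *)
have [c0|c_neq0] := eqVneq (2 * M) 0.
  exists 0, 1 => // e _; rewrite /h /h'0 c0 invr0 oppr0 !mul0r mulr0 addr0.
  by rewrite !big1 ?oppr0 ?addr0 ?normr0 // => i _; rewrite mulr0 /xlog2 eqxx.
have c_gt0 : 0 < 2 * M by rewrite lt_def c_neq0 mulr_ge0 ?ler0n.
have [K K_ge0 [d1 d1_gt0 matching]] :=
  laplacian_perturbation adj_sym Ep_loopless Em_loopless VtV LV lam_inj.
have [|C [d d_gt0 expand]] := entropy_first_order (nut := lamt) c_gt0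
  (laplacian_eigenvalue_ge0 adj_sym VtV LV)
  (eigenvalue_shift_eq0 adj_sym Ep_loopless Em_loopless VtV LV lam_inj).
  exists K => //; exists (Num.min d0 d1) => [|e]; first by rewrite lt_min d0_gt0.
  rewrite lt_min => /andP[e_d0 e_d1]; have [lamt_inj lamt_eig] := spectrum e e_d0.
  exact: matching e (lamt e) e_d1 lamt_inj lamt_eig.
exists C, d => // e /expand; apply: le_trans.
rewrite -normrN /h /h'0 /eigenvalue_shift le_eqVlt; apply/orP; left; apply/eqP.
by congr `|_|; ring.
Qed.
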